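(* Let $r>1$ and let $k,\ell,m$ be positive integers with $k\ge 2$. Choose $x_0$ uniformly at random from the vertex set of the $(k,\ell,m)$-metafunnel and run the Moran process with fitness $r$ on it with initial mutant $x_0$. Then the extinction probability is at least $1/(2(m+r))$.
   Context: Moran process: given a directed graph $G$ and fitness $r$, one vertex $x_0$ is a mutant, the rest non-mutants. At each step a vertex $v$ is chosen with probability proportional to fitness (mutants $r$, non-mutants $1$), an out-neighbour $w$ of $v$ is chosen uniformly at random and the state of $v$ is copied to $w$. Extinction: eventually no vertex is a mutant. The $(k,\ell,m)$-metafunnel has vertex set $V_0\cup V_1\cup\dots\cup V_k$ (disjoint), where $V_0=\{v^*\}$ and for $i\in[k]$, $V_i$ is the disjoint union of sets $V_{i,1},\dots,V_{i,\ell}$ each of size $m^i$; its edge set is $(V_0\times V_k)\cup(V_1\times V_0)\cup\bigcup_{i\in[k-1]}\bigcup_{j\in[\ell]}(V_{i+1,j}\times V_{i,j})$. *)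

From HB Require Import structures.
From mathcomp Require Import all_boot all_order all_algebra.
From mathcomp Require Import all_classical all_reals topology normedtype sequences.
Set Implicit Arguments. Unset Strict Implicit. Unset Printing Implicit Defensive.
Import Order.TTheory GRing.Theory Num.Theory numFieldNormedType.Exports.
Local Open Scope ring_scope.

Section Moran.
Variables (R : realType) (V : finType) (E : rel V) (r : R).

Definition outN (v : V) : {set V} := [set w | E v w].
Definition outdeg (v : V) : nat := #|outN v|.

(* fitness of v in state S (S = set of mutants) *)
Definition fit (S : {set V}) (v : V) : R := if v \in S then r else 1.
Definition totfit (S : {set V}) : R := \sum_(v : V) fit S v.

Definition moran_update (S : {set V}) (v w : V) : {set V} :=
  if v \in S then w |: S else S :\ w.

(* probability that, started from S, the mutants are extinct
   (state = set0) after at most n steps *)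
Fixpoint ext_within (n : nat) (S : {set V}) : R :=
  match n with
  | 0%N => if S == finset.set0 then 1 else 0
  | n'.+1 => if S == finset.set0 then 1 else
      \sum_(v : V) \sum_(w in outN v)
         (fit S v / totfit S) * (outdeg v)%:R^-1 * ext_within n' (moran_update S v w)
  end.

(* extinction probability from initial mutant set S: probability of
   eventually reaching set0 = limit of the nondecreasing sequence above *)
Definition ext_prob (S : {set V}) : R := limn (fun n => ext_within n S).

Definition ext_prob_uniform : R :=
  (#|V|%:R)^-1 * \sum_(x : V) ext_prob [set x].
End Moran.

(* A vertex is either None = v^*, or Some <<i; (j, a)>> with i : 'I_k
   standing for level i+1 in [k], j : 'I_l the branch, and a : 'I_(m^(i+1))
   the index inside V_{i+1, j}. *)
Definition mf_vertex (k l m : nat) : finType :=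
  option {i : 'I_k & ('I_l * 'I_(m ^ i.+1))%type}.

Definition mf_edge (k l m : nat) : rel (mf_vertex k l m) :=
  fun u v =>
    match u, v with
    | None, Some y => (tag y).+1 == k                 (* V_0 x V_k *)
    | Some x, None => (tag x : nat) == 0%N            (* V_1 x V_0 *)
    | Some x, Some y => ((tag x : nat) == (tag y).+1) &&
                        ((tagged x).1 == (tagged y).1)  (* V_{i+1,j} x V_{i,j} *)
    | None, None => false
    end.

From HB Require Import structures.
From mathcomp Require Import all_boot all_order all_algebra.
From mathcomp Require Import all_classical all_reals topology normedtype sequences.
From mathcomp Require Import ring lra zify.
Set Implicit Arguments. Unset Strict Implicit. Unset Printing Implicit Defensive.
Import Order.TTheory GRing.Theory Num.Theory numFieldNormedType.Exports.
Local Open Scope ring_scope.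

(* Start from a single mutant [x] on a graph without self-loops.  In one step
   [x] is killed (some in-neighbour [v] copies onto it) with weight
   [T(x) = \sum_(v -> x) 1 / d+(v)], the temperature of [x]; it reproduces
   with weight [r], a branch we bound below by [0]; otherwise the state is
   unchanged.  Hence its extinction probability [L] satisfies
   [r L >= T(x) (1 - L)], i.e. [L >= T(x) / (T(x) + r)].  In the metafunnel
   every vertex outside the top level [V_k] has temperature at least [m]:
   [v^*] has temperature [l m], and a vertex of [V_{i,j}], [i < k], has as
   in-neighbours the [m^(i+1)] vertices of [V_{i+1,j}], each of out-degree
   [m^i].  Since [|V_k| = m |V_{k-1}|], at least a [1/(2m)] fraction of the
   vertices are such starting points. *)

Section MoranSingleMutant.
Variables (R : realType) (V : finType) (E : rel V) (r : R).
Hypothesis r_gt0 : 0 < r.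

Local Notation ext := (ext_within E r).

Definition temperature (x : V) : R := \sum_(v | E v x) (outdeg E v)%:R^-1.

Lemma temperature_const (x : V) (S : {set V}) d :
  [set v | E v x] = S -> {in S, forall v, outdeg E v = d} ->
  temperature x = #|S|%:R / d%:R.
Proof.
move=> inN_x outdeg_S; rewrite /temperature (eq_bigl (fun v => v \in S)); last first.
  by move=> v; rewrite -inN_x inE.
rewrite (eq_bigr (fun _ => d%:R^-1)) => [|v /outdeg_S -> //].
by rewrite sumr_const [RHS]mulrC mulr_natr.
Qed.

Lemma fit_gt0 (S : {set V}) v : 0 < fit r S v.
Proof. by rewrite /fit; case: ifP. Qed.

Lemma totfit_gt0 (x : V) (S : {set V}) : 0 < totfit r S.
Proof.
rewrite /totfit (bigD1 x) //= ltr_pwDl ?fit_gt0 //.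
by apply: sumr_ge0 => v _; apply/ltW/fit_gt0.
Qed.

Lemma step_weight_ge0 (S : {set V}) v : 0 <= fit r S v / totfit r S * (outdeg E v)%:R^-1.
Proof.
by rewrite mulr_ge0 ?invr_ge0 // divr_ge0 ?(ltW (fit_gt0 _ _)) ?(ltW (totfit_gt0 v _)).
Qed.

Lemma ext_within_ge0 n S : 0 <= ext n S.
Proof.
elim: n S => [|n IH] S /=; first by case: ifP.
case: ifP => // _; apply: sumr_ge0 => v _; apply: sumr_ge0 => w _.
by rewrite mulr_ge0 ?step_weight_ge0.
Qed.

Lemma ext_within_le1 n S : ext n S <= 1.
Proof.
elim: n S => [|n IH] S /=; first by case: ifP.
case: ifP => // /set0Pn[x _].
have weight_le v : \sum_(w in outN E v) fit r S v / totfit r S * (outdeg E v)%:R^-1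
    <= fit r S v / totfit r S.
  rewrite sumr_const -mulrnAr /outdeg.
  have [->|d_gt0] := posnP #|outN E v|.
    by rewrite mulr0n mulr0 divr_ge0 ?ltW ?fit_gt0 ?(totfit_gt0 x).
  by rewrite -mulr_natr mulVf ?pnatr_eq0 -?lt0n // mulr1.
apply: le_trans (_ : \sum_v fit r S v / totfit r S <= 1); last first.
  by rewrite -mulr_suml divff // gt_eqF // (totfit_gt0 x).
apply: ler_sum => v _; apply: le_trans (weight_le v).
by apply: ler_sum => w _; rewrite ler_piMr ?step_weight_ge0.
Qed.

Lemma nondecreasing_ext_within S : nondecreasing_seq (ext ^~ S).
Proof.
apply/nondecreasing_seqP => n; elim: n S => [|n IH] S.
  have [-> | S0] := eqVneq S finset.set0; first by rewrite /= eqxx.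
  by rewrite [X in X <= _]/= (negbTE S0); apply: (ext_within_ge0 1).
rewrite [ext n.+1 S]/= [ext n.+2 S]/=; case: ifP => // _.
by do 2 (apply: ler_sum => ? _); rewrite ler_wpM2l ?step_weight_ge0.
Qed.

Lemma ext_within_cvg S : cvgn (ext ^~ S).
Proof.
apply: nondecreasing_is_cvgn; first exact: nondecreasing_ext_within.
by exists 1 => _ [n _ <-]; apply: ext_within_le1.
Qed.

Lemma ext_within_le_prob n S : ext n S <= ext_prob E r S.
Proof. exact: nondecreasing_cvgn_le (nondecreasing_ext_within S) (@ext_within_cvg S) n. Qed.

Lemma ext_prob_ge0 S : 0 <= ext_prob E r S.
Proof. exact: le_trans (ext_within_ge0 0 S) (ext_within_le_prob 0 S). Qed.

Lemma ext_within_update_set1 n (x v w : V) : v != x ->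
  ext n (moran_update [set x] v w) = ext n [set x] + (w == x)%:R * (1 - ext n [set x]).
Proof.
rewrite /moran_update inE => /negbTE ->.
have [->|wx] := eqVneq w x.
  by rewrite finset.setDv mul1r addrC subrK; case: n => [|n] /=; rewrite eqxx.
rewrite mul0r addr0; congr ext; apply/finset.setP => z; rewrite !inE.
by case: (eqVneq z x) => [->|]; rewrite ?andbF // eq_sym wx.
Qed.

Lemma totfit_set1 (x : V) : totfit r [set x] = r + (#|V|.-1)%:R.
Proof.
rewrite /totfit (bigD1 x) //= /fit inE eqxx; congr (_ + _).
rewrite (eq_bigr (fun _ => 1)) => [|v]; last by rewrite inE => /negbTE ->.
by rewrite sumr_const cardC1.
Qed.

Lemma ext_within_set1_nonmutant_move (x v : V) n : v != x -> (0 < outdeg E v)%N ->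
  \sum_(w in outN E v) fit r [set x] v / totfit r [set x] * (outdeg E v)%:R^-1
                       * ext n (moran_update [set x] v w)
  = (totfit r [set x])^-1
    * (ext n [set x] + (E v x)%:R * ((outdeg E v)%:R^-1 * (1 - ext n [set x]))).
Proof.
move=> vx d_gt0; set q := ext n [set x].
have -> : fit r [set x] v = 1 by rewrite /fit inE (negbTE vx).
under eq_bigr do rewrite ext_within_update_set1 //.
rewrite -big_distrr /= big_split /= sumr_const -big_distrl /=.
have -> : \sum_(w in outN E v) ((w == x)%:R : R) = (E v x)%:R.
  rewrite big_mkcond (bigD1 x) //= big1 => [|w /negbTE wx]; last by rewrite wx if_same.
  by rewrite addr0 inE eqxx; case: (E v x).
have dE : (outdeg E v)%:R != 0 :> R by rewrite pnatr_eq0 -lt0n.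
rewrite -/q -mulr_natr; rewrite /outdeg in dE *; field.
by rewrite dE gt_eqF ?(totfit_gt0 x).
Qed.

Lemma ext_within_set1_step n (x : V) : ~~ E x x ->
    (forall v, v != x -> (0 < outdeg E v)%N) ->
  (totfit r [set x])^-1
    * ((#|V|.-1)%:R * ext n [set x] + temperature x * (1 - ext n [set x]))
    <= ext n.+1 [set x].
Proof.
move=> Exx d_gt0; set q := ext n [set x].
have x_nonempty : [set x] != finset.set0 by apply/set0Pn; exists x; rewrite inE.
rewrite [ext n.+1 _]/= (negbTE x_nonempty) (bigD1 x) //=.
(* the dropped term is the one in which the mutant itself reproduces *)
apply: ler_wpDl.
  by apply: sumr_ge0 => w _; rewrite mulr_ge0 ?step_weight_ge0 ?ext_within_ge0.
under eq_bigr => v vx do rewrite ext_within_set1_nonmutant_move ?d_gt0 //.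
rewrite -mulr_sumr big_split /= sumr_const cardC1 /temperature.
have -> : \sum_(v | v != x) (E v x)%:R * ((outdeg E v)%:R^-1 * (1 - q))
          = \sum_(v | E v x) (outdeg E v)%:R^-1 * (1 - q).
  rewrite [RHS]big_mkcond [RHS](bigD1 x) //= (negbTE Exx) add0r.
  by apply: eq_bigr => v _; case: (E v x); rewrite ?mul1r ?mul0r.
by rewrite -big_distrl /= mulr_natl.
Qed.

Lemma temperature_ratio_le_ext_prob (x : V) : ~~ E x x ->
    (forall v, v != x -> (0 < outdeg E v)%N) ->
  temperature x / (temperature x + r) <= ext_prob E r [set x].
Proof.
move=> Exx d_gt0; set T := temperature x; set L := ext_prob E r [set x].
set N : R := (#|V|.-1)%:R.
have T_ge0 : 0 <= T by apply: sumr_ge0 => v _; rewrite invr_ge0.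
have W_gt0 := totfit_gt0 x [set x].
(* [L] satisfies the one-step bound of [ext_within_set1_step] in the limit. *)
have fixpoint : (totfit r [set x])^-1 * (N * L + T * (1 - L)) <= L.
  have q_cvg := @ext_within_cvg [set x].
  apply: (cvgr_to_le (F := eventually) (f := fun n =>
      (totfit r [set x])^-1 * (N * ext n [set x] + T * (1 - ext n [set x])))).
    exact: (cvgMl_tmp (a := (totfit r [set x])^-1)
      (cvgD (cvgMl_tmp (a := N) q_cvg)
            (cvgMl_tmp (a := T) (cvgB (cvg_cst (1 : R)) q_cvg)))).
  apply: nearW => n; apply: le_trans (ext_within_set1_step n Exx d_gt0) _.
  exact: ext_within_le_prob.
rewrite ler_pdivrMl // totfit_set1 -/N in fixpoint.
by rewrite ler_pdivrMr ?ltr_wpDl //; nra.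
Qed.

Lemma ext_prob_uniform_ge (A : {set V}) c :
  (forall x, x \in A -> c <= ext_prob E r [set x]) ->
  #|A|%:R / #|V|%:R * c <= ext_prob_uniform E r.
Proof.
move=> c_le; rewrite /ext_prob_uniform.
have -> : #|A|%:R / #|V|%:R * c = #|V|%:R^-1 * (c *+ #|A|) by rewrite -mulr_natr; ring.
rewrite ler_wpM2l ?invr_ge0 //.
rewrite (bigID (mem A)) /= -sumr_const ler_wpDr //.
  by apply: sumr_ge0 => x _; apply: ext_prob_ge0.
by apply: ler_sum.
Qed.

End MoranSingleMutant.

Lemma le_ratio_addr (R : realFieldType) (a b c : R) : 0 < c -> 0 <= a -> a <= b ->
  a / (a + c) <= b / (b + c).
Proof.
move=> c_gt0 a_ge0 ab; have b_ge0 : 0 <= b by apply: le_trans ab.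
by rewrite ler_pdivrMr ?ltr_wpDl // mulrAC ler_pdivlMr ?ltr_wpDl //; nra.
Qed.

Section Metafunnel.
Variables (k l m : nat).
Hypotheses (k_ge2 : (2 <= k)%N) (l_gt0 : (0 < l)%N) (m_gt0 : (0 < m)%N).
Local Notation V := (mf_vertex k l m).
Local Notation E := (@mf_edge k l m).
Local Notation cell := (fun i : 'I_k => ('I_l * 'I_(m ^ i.+1))%type).

Definition mf_vtx (i : 'I_k) (c : cell i) : V := Some (Tagged cell c).

Lemma mf_vtx_inj i : injective (@mf_vtx i).
Proof. by move=> c c' [e]; apply: eq_from_Tagged e. Qed.

Definition mf_block (i : 'I_k) (J : {set 'I_l}) : {set V} :=
  @mf_vtx i @: finset.setX J [set: 'I_(m ^ i.+1)].

Lemma card_mf_block i J : #|mf_block i J| = (#|J| * m ^ i.+1)%N.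
Proof. by rewrite card_imset ?cardsX ?cardsT ?card_ord //; apply: mf_vtx_inj. Qed.

Lemma mem_mf_block i J (v : V) : (v \in mf_block i J) =
  if v is Some y then (tag y == i) && ((tagged y).1 \in J) else false.
Proof.
case: v => [[i' c]|]; last by apply/imsetP => -[].
case: (eqVneq i' i) => [ii'|ne] /=.
  by subst i'; rewrite -[Some _]/(mf_vtx c) mem_imset ?inE ?andbT //; apply: mf_vtx_inj.
apply/imsetP => -[c' _ [ii' _]].
by rewrite ii' eqxx in ne.
Qed.

Lemma mf_outN_root (i : 'I_k) : i.+1 = k -> outN E None = mf_block i [set: 'I_l].
Proof.
move=> ik; apply/finset.setP => -[y|]; rewrite inE mem_mf_block //= inE andbT.
by rewrite -val_eqE /=; apply/eqP/eqP; lia.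
Qed.

Lemma mf_outN_level1 (i : 'I_k) (c : cell i) :
  i = 0 :> nat -> outN E (mf_vtx c) = [set None].
Proof.
move=> i0; apply/finset.setP => -[y|]; rewrite !inE /= /mf_edge /=; last exact/eqP.
by have -> : ((i : nat) == (tag y).+1) = false by rewrite i0.
Qed.

Lemma mf_outN_succ (i i' : 'I_k) (c : cell i) :
  i = i'.+1 :> nat -> outN E (mf_vtx c) = mf_block i' [set c.1].
Proof.
move=> ii'; apply/finset.setP => -[y|]; rewrite inE mem_mf_block /= /mf_edge /=.
  have -> : ((i : nat) == (tag y).+1) = (tag y == i') by rewrite ii' eqSS -val_eqE eq_sym.
  by rewrite finset.in_set1 [c.1 == _]eq_sym.
by rewrite ii'.
Qed.

Lemma mf_inN_root (i : 'I_k) : i = 0 :> nat -> [set v | E v None] = mf_block i [set: 'I_l].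
Proof.
move=> i0; apply/finset.setP => -[y|]; rewrite inE mem_mf_block //= inE andbT.
by rewrite -val_eqE /= i0.
Qed.

Lemma mf_inN_succ (i i' : 'I_k) (c : cell i') :
  i = i'.+1 :> nat -> [set v | E v (mf_vtx c)] = mf_block i [set c.1].
Proof.
move=> ii'; apply/finset.setP => -[y|]; rewrite inE mem_mf_block /= /mf_edge /=.
  by rewrite finset.in_set1 -(val_eqE (tag y) i) /= ii'.
by rewrite -ii' ltn_eqF.
Qed.

Lemma mf_edge_irrefl x : ~~ E x x.
Proof. by case: x => [[i c]|] //=; rewrite (ltn_eqF (ltnSn i)). Qed.

Lemma mf_outdeg_gt0 v : (0 < outdeg E v)%N.
Proof.
rewrite /outdeg; case: v => [[[[|i] lt_i] c]|].
- by rewrite -[Some _]/(mf_vtx c) mf_outN_level1 ?cards1.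
- rewrite -[Some _]/(mf_vtx c) (@mf_outN_succ _ (Ordinal (ltnW lt_i))) //.
  by rewrite card_mf_block cards1 mul1n expn_gt0 m_gt0.
- have lt_k : (k.-1 < k)%N by lia.
  rewrite (@mf_outN_root (Ordinal lt_k)) /= ?card_mf_block ?cardsT ?card_ord; last by lia.
  by rewrite muln_gt0 l_gt0 expn_gt0 m_gt0.
Qed.

Lemma mf_temperature_ge (R : realType) x : ~~ E None x -> m%:R <= temperature R E x.
Proof.
case: x => [[i [j b]]|] /= top_i.
  have lt_i : (i.+1 < k)%N by rewrite ltn_neqAle top_i ltn_ord.
  rewrite -[Some _]/(mf_vtx (j, b)).
  rewrite (@temperature_const _ _ _ _ _ (m ^ i.+1) (@mf_inN_succ (Ordinal lt_i) _ _ _)) //.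
    rewrite card_mf_block cards1 mul1n /= expnS natrM mulfK //.
    by rewrite pnatr_eq0 -lt0n expn_gt0 m_gt0.
  move=> v /imsetP[[j' b'] _ ->].
  by rewrite /outdeg (@mf_outN_succ _ i) // card_mf_block cards1 mul1n.
rewrite (@temperature_const _ _ _ _ _ 1 (@mf_inN_root (Ordinal (ltnW k_ge2)) _)) //.
  by rewrite card_mf_block cardsT card_ord divr1 expn1 ler_nat leq_pmull.
by move=> v /imsetP[[j b] _ ->]; rewrite /outdeg mf_outN_level1 ?cards1.
Qed.

Lemma card_mf_vertex_le : (#|V| <= 2 * m * #|~: outN E None|)%N.
Proof.
have lt_k1 : (k.-1 < k)%N by lia.
have lt_k2 : (k.-2 < k)%N by lia.
have card_top : #|outN E None| = (l * m ^ k)%N.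
  rewrite (@mf_outN_root (Ordinal lt_k1)) ?card_mf_block ?cardsT ?card_ord /=; last by lia.
  by rewrite prednK // ltnW.
have below_top : mf_block (Ordinal lt_k2) [set: 'I_l] \subset ~: outN E None.
  apply/fintype.subsetP => -[[i c]|]; rewrite mem_mf_block // !inE /= -val_eqE /=.
  by rewrite andbT => /eqP ->; lia.
have := subset_leq_card below_top; rewrite card_mf_block cardsT card_ord /=.
rewrite -(cardsC (outN E None)) card_top.
have -> : (m ^ k = m * m ^ k.-2.+1)%N by rewrite -expnS prednK ?prednK //; lia.
set p := (m ^ _)%N; set a := #|_|; nia.
Qed.

End Metafunnel.

Theorem lemma5p2 (R : realType) (r : R) (k l m : nat) :
  1 < r -> (2 <= k)%N -> (0 < l)%N -> (0 < m)%N ->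
  ext_prob_uniform (@mf_edge k l m) r >= (2 * (m%:R + r))^-1.
Proof.
move=> r_gt1 k_ge2 l_gt0 m_gt0; have r_gt0 : 0 < r by lra.
(* the out-neighbourhood of [v^*] is the top level [V_k] *)
set A := ~: outN (@mf_edge k l m) None.
have ext_ge x : x \in A -> m%:R / (m%:R + r) <= ext_prob (@mf_edge k l m) r [set x].
  rewrite !inE => top_x; apply: le_trans (temperature_ratio_le_ext_prob r_gt0
    (mf_edge_irrefl x) (fun v _ => mf_outdeg_gt0 k_ge2 l_gt0 m_gt0 v)).
  by apply: le_ratio_addr => //; apply: mf_temperature_ge.
apply: le_trans (ext_prob_uniform_ge r_gt0 ext_ge).
have card_le : (#|mf_vertex k l m|%:R : R) <= 2 * m%:R * #|A|%:R.
  by rewrite -natrM -natrM ler_nat card_mf_vertex_le.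
have card_gt0 : (0 : R) < #|mf_vertex k l m|%:R by rewrite ltr0n card_option.
have mr_gt0 : (0 : R) < m%:R + r by rewrite ltr_wpDl.
rewrite invfM mulrA ler_pM2r ?invr_gt0 // mulrAC ler_pdivlMr //; lra.
Qed.
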